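(* Let $\mathcal M=(M,<,+,0,\ldots)$ be a definably complete locally o-minimal expansion of an ordered abelian group. Let $C\subseteq M^m$ be a definable, closed and bounded set and let $\varphi,\psi:C\to M_{>0}$ be definable functions such that for every $x\in C$ there is $\delta>0$ with $\varphi(x')\ge\psi(x)$ for all $x'\in C$ satisfying $|x'-x|<\delta$. Then $\inf\varphi(C)>0$.
   Context: Definable = with parameters; definably complete: sup/inf of definable subsets of $M$ exist in $M\cup\{\pm\infty\}$; locally o-minimal: each definable subset of $M$ is, near each point, a finite union of points and open intervals. $M_{>0}=\{x\in M:x>0\}$, $|x|=\max_i|x_i|$. *)

From HB Require Import structures.
From mathcomp Require Import all_boot all_order all_algebra.
Set Implicit Arguments. Unset Strict Implicit. Unset Printing Implicit Defensive.
Import GRing.Theory.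
Local Open Scope ring_scope.

Section Defs.
Variables (M : zmodType) (lt : M -> M -> Prop).

Definition le (x y : M) : Prop := lt x y \/ x = y.

Definition ordered_group : Prop :=
  [/\ (forall x, ~ lt x x),
      (forall x y z, lt x y -> lt y z -> lt x z),
      (forall x y, [\/ lt x y, x = y | lt y x]) &
      (forall x y z, lt x y -> lt (x + z) (y + z))].

Definition init n (z : 'I_n.+1 -> M) : 'I_n -> M :=
  fun i => z (widen_ord (leqnSn n) i).
Definition tailc n (z : 'I_n.+1 -> M) : 'I_n -> M :=
  fun i => z (lift ord0 i).

(* A structure on (M,<,+) in the sense of van den Dries: for each n a Boolean
   algebra D n of subsets of M^n, closed under products with M, projections,
   containing the diagonals, the order, the graph of +, and all points
   (so "definable" = definable with parameters). *)
Record is_structure (D : forall n, (('I_n -> M) -> Prop) -> Prop) : Prop := {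
  st_empty : forall n, D n (fun _ => False);
  st_compl : forall n A, D n A -> D n (fun x => ~ A x);
  st_union : forall n A B, D n A -> D n B -> D n (fun x => A x \/ B x);
  st_prodr : forall n A, D n A -> D n.+1 (fun z => A (init z));
  st_prodl : forall n A, D n A -> D n.+1 (fun z => A (tailc z));
  st_diag  : forall n, D n.+1 (fun z => z ord0 = z ord_max);
  st_proj  : forall n A, D n.+1 A ->
               D n (fun x => exists z, A z /\ forall i, init z i = x i);
  st_lt    : D 2 (fun z => lt (z ord0) (z ord_max));
  st_add   : D 3 (fun z => z ord0 + z (inord 1) = z ord_max);
  st_point : forall a, D 1 (fun z => z ord0 = a)
}.

Definition def1 (D : forall n, (('I_n -> M) -> Prop) -> Prop) (A : M -> Prop) :=
  D 1 (fun z => A (z ord0)).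

Definition is_lub (A : M -> Prop) (s : M) : Prop :=
  (forall y, A y -> le y s) /\ (forall t, (forall y, A y -> le y t) -> le s t).
Definition is_glb (A : M -> Prop) (s : M) : Prop :=
  (forall y, A y -> le s y) /\ (forall t, (forall y, A y -> le t y) -> le t s).

(* Definably complete: every definable subset of M has sup and inf in
   M u {+-oo}; i.e. nonempty bounded-above (below) sets have a sup (inf) in M. *)
Definition def_complete (D : forall n, (('I_n -> M) -> Prop) -> Prop) : Prop :=
  forall A, def1 D A -> (exists a, A a) ->
    ((exists b, forall y, A y -> le y b) -> exists s, is_lub A s) /\
    ((exists b, forall y, A y -> le b y) -> exists s, is_glb A s).

Definition loc_ominimal (D : forall n, (('I_n -> M) -> Prop) -> Prop) : Prop :=
  forall A, def1 D A -> forall a, exists l u, lt l a /\ lt a u /\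
    exists (k : nat) (p : 'I_k -> M) (j : nat) (c d : 'I_j -> M),
      forall x, lt l x -> lt x u ->
        (A x <-> (exists i, x = p i) \/ (exists i, lt (c i) x /\ lt x (d i))).

Definition near_box m (delta : M) (x y : 'I_m -> M) : Prop :=
  forall i, lt (- delta) (y i - x i) /\ lt (y i - x i) delta.

Definition closed_set m (C : ('I_m -> M) -> Prop) : Prop :=
  forall x, ~ C x -> exists delta, lt 0 delta /\
    forall y, near_box delta x y -> ~ C y.

Definition bounded_set m (C : ('I_m -> M) -> Prop) : Prop :=
  exists r, forall x, C x -> forall i, lt (- r) (x i) /\ lt (x i) r.

Definition def_fun (D : forall n, (('I_n -> M) -> Prop) -> Prop) m (C : ('I_m -> M) -> Prop) (f : ('I_m -> M) -> M) :=
  D m.+1 (fun z => C (init z) /\ z ord_max = f (init z)).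

End Defs.

(* Suppose the infimum of phi over C were 0.  Using definable completeness we
   choose, one coordinate at a time, a point a at which points of C with
   arbitrarily small phi accumulate: the k-th coordinate of a is the supremum
   of the definable set of those t such that there are such points, with k-th
   coordinate at least t, whose earlier coordinates are arbitrarily close to
   those of a.  As C is closed, a lies in C, and then phi >= psi a > 0 near a,
   a contradiction. *)

From mathcomp Require Import all_boot all_order all_algebra.
From Stdlib Require Import Classical FunctionalExtensionality PropExtensionality.
Import GRing.Theory.
Local Open Scope ring_scope.

Set Implicit Arguments.
Unset Strict Implicit.

Lemma congr_ord T n (f : 'I_n -> T) (i j : 'I_n) : val i = val j -> f i = f j.
Proof. by move=> /ord_inj ->. Qed.

Section OrderedGroup.
Variables (M : zmodType) (lt : M -> M -> Prop).
Hypothesis HM : ordered_group lt.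
Local Notation le := (le lt).

Lemma lt_irrefl x : ~ lt x x.
Proof. by case: HM. Qed.

Lemma lt_trans x y z : lt x y -> lt y z -> lt x z.
Proof. by case: HM => _ + _ _; apply. Qed.

Lemma lt_add2r z x y : lt (x + z) (y + z) <-> lt x y.
Proof.
case: HM => _ _ _ ltD; split; last exact: ltD.
by move=> /(ltD _ _ (- z)); rewrite !addrK.
Qed.

Lemma lt_total x y : [\/ lt x y, x = y | lt y x].
Proof. by case: HM. Qed.

Lemma leNgt x y : le x y <-> ~ lt y x.
Proof.
split=> [[lt_xy lt_yx|->]|ngt]; first exact: lt_irrefl (lt_trans lt_xy lt_yx).
  exact: lt_irrefl.
by case: (lt_total x y) => [|<-|//]; [left|right].
Qed.

Lemma ltNge x y : lt x y <-> ~ le y x.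
Proof.
split=> [lt_xy /leNgt//|nle].
case: (lt_total x y) => [//|eq_xy|lt_yx]; case: nle.
  by rewrite eq_xy; right.
by left.
Qed.

Lemma le_lt_trans x y z : le x y -> lt y z -> lt x z.
Proof. by case=> [lt_xy /(lt_trans lt_xy)|->]. Qed.

Lemma lt_le_trans x y z : lt x y -> le y z -> lt x z.
Proof. by move=> lt_xy [/(lt_trans lt_xy)|<-]. Qed.

Lemma lt_oppr x y : lt x y -> lt (- y) (- x).
Proof. by move=> lt_xy; rewrite -(lt_add2r (x + y)) [- y + _]addrC addrK addKr. Qed.

Lemma lt_addr_pos x d : lt 0 d -> lt x (x + d).
Proof. by move=> d_gt0; rewrite -(lt_add2r x) add0r addrC in d_gt0. Qed.

Lemma lt_subr_pos x d : lt 0 d -> lt (x - d) x.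
Proof. by move=> d_gt0; rewrite -(lt_add2r (x - d)) add0r [d + _]addrC addrNK in d_gt0. Qed.

Lemma exists_pos_le2 d1 d2 : lt 0 d1 -> lt 0 d2 ->
  exists d, [/\ lt 0 d, le d d1 & le d d2].
Proof.
move=> d1_gt0 d2_gt0; case: (lt_total d1 d2) => [lt12|<-|lt21].
- by exists d1; split=> //; [right|left].
- by exists d1; split=> //; right.
- by exists d2; split=> //; [left|right].
Qed.

Lemma lub_gt A b t : is_lub lt A b -> lt t b -> exists2 y, A y & lt t y.
Proof.
move=> [_ least] lt_tb; apply: NNPP => noy.
suff : le b t by move/leNgt; apply.
by apply: least => y Ay; apply/leNgt => lt_ty; apply: noy; exists y.
Qed.

Lemma glb_lt A s t : is_glb lt A s -> lt s t -> exists2 y, A y & lt y t.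
Proof.
move=> [_ greatest] lt_st; apply: NNPP => noy.
suff : le t s by move/leNgt; apply.
by apply: greatest => y Ay; apply/leNgt => lt_yt; apply: noy; exists y.
Qed.

Lemma glb_gt0 A s : is_glb lt A s -> (forall y, A y -> lt 0 y) ->
  ~ (forall e, lt 0 e -> exists2 y, A y & lt y e) -> lt 0 s.
Proof.
move=> glb_s A_gt0 not_small.
case: (proj2 glb_s 0 (fun y Ay => or_introl (A_gt0 y Ay))) => // s0.
by case: not_small => e; rewrite s0 => /(glb_lt glb_s).
Qed.

Definition near (d c u : M) := lt (- d) (u - c) /\ lt (u - c) d.

Lemma nearE d c u : near d c u <-> lt c (u + d) /\ lt u (d + c).
Proof.
rewrite /near -(lt_add2r (c + d) (- d)) -(lt_add2r c (u - c)) addrNK.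
by rewrite [- d + _]addrC addrK addrA addrNK.
Qed.

Lemma near_le d d' c u : le d d' -> near d c u -> near d' c u.
Proof.
move=> le_dd' [lo hi]; split; last exact: lt_le_trans hi le_dd'.
case: le_dd' => [lt_dd'|<-//]; exact: lt_trans (lt_oppr lt_dd') lo.
Qed.

Section Definable.
Variable D : forall n, (('I_n -> M) -> Prop) -> Prop.
Hypothesis HD : is_structure lt D.
Arguments D : clear implicits.

Lemma def_ext n (A B : ('I_n -> M) -> Prop) :
  D n A -> (forall x, A x <-> B x) -> D n B.
Proof.
move=> DA AB; suff <- : A = B by [].
by apply: functional_extensionality => x; apply/propositional_extensionality/AB.
Qed.

Lemma def_neg n A : D n A -> D n (fun x => ~ A x).
Proof. exact: (st_compl HD). Qed.

Lemma def_or n A B : D n A -> D n B -> D n (fun x => A x \/ B x).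
Proof. exact: (st_union HD). Qed.

Lemma def_true n : D n (fun _ => True).
Proof. by apply: def_ext (def_neg (st_empty HD n)) _ => x; split=> // _ []. Qed.

Lemma def_and n A B : D n A -> D n B -> D n (fun x => A x /\ B x).
Proof.
move=> DA DB; apply: def_ext (def_neg (def_or (def_neg DA) (def_neg DB))) _.
move=> x; split=> [nor|[Ax Bx] [/(_ Ax)|/(_ Bx)]//].
by split; apply: NNPP => nAB; apply: nor; [left|right].
Qed.

Lemma def_imply n A B : D n A -> D n B -> D n (fun x => A x -> B x).
Proof.
move=> DA DB; apply: def_ext (def_or (def_neg DA) DB) _ => x.
split=> [[nAx /nAx|Bx _]//|AB].
by case: (classic (A x)) => [/AB|]; [right|left].
Qed.

Lemma def_forall_ord n k (P : 'I_k -> ('I_n -> M) -> Prop) :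
  (forall l, D n (P l)) -> D n (fun x => forall l, P l x).
Proof.
elim: k P => [|k IH] P DP.
  by apply: def_ext (@def_true n) _ => x; split=> // _ [].
apply: def_ext (def_and (DP ord0) (IH _ (fun l => DP (lift ord0 l)))) _ => x.
split=> [[P0 Plift] l|Px]; last by split=> [|l]; apply: Px.
by case: (unliftP ord0 l) => [j ->|->].
Qed.

Lemma def_prop n (P : Prop) : D n (fun _ => P).
Proof.
case: (classic P) => [p|np].
  by apply: def_ext (@def_true n) _.
by apply: def_ext (st_empty HD n) _.
Qed.

Lemma widen_ord_id n (le_nn : (n <= n)%N) (x : 'I_n -> M) :
  (fun i => x (widen_ord le_nn i)) = x.
Proof. by apply: functional_extensionality => i; apply: congr_ord. Qed.

Lemma def_widen k A : D k A -> forall n (le_kn : (k <= n)%N),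
  D n (fun x => A (fun i => x (widen_ord le_kn i))).
Proof.
move=> DA; elim=> [|n IH] le_kn.
  have k0 : k = 0%N by apply/eqP; rewrite -leqn0.
  by subst k; apply: def_ext DA _ => x; rewrite widen_ord_id.
case: (leqP k n) => [le_kn'|lt_nk]; last first.
  have /eqP kn : k == n.+1 by rewrite eqn_leq le_kn.
  by subst k; apply: def_ext DA _ => x; rewrite widen_ord_id.
apply: def_ext (st_prodr HD (IH le_kn')) _ => x.
by rewrite (_ : (fun i => _) = (fun i => x (widen_ord le_kn i))) //;
  apply: functional_extensionality => i; rewrite /init; apply: congr_ord.
Qed.

Lemma def_rshift k A : D k A -> forall p,
  D (p + k) (fun x => A (fun i => x (rshift p i))).
Proof.
move=> DA; elim=> [|p IH].
  by apply: def_ext DA _ => x; rewrite (_ : (fun i => _) = x) //;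
    apply: functional_extensionality => i; apply: (congr_ord x).
apply: def_ext (st_prodl HD IH) _ => x.
rewrite /tailc (_ : (fun i => _) = (fun i => x (rshift p.+1 i))) //.
by apply: functional_extensionality => i; apply: congr_ord; rewrite /= /bump add1n.
Qed.

Lemma def_eq n (p q : 'I_n) : D n (fun x => x p = x q).
Proof.
wlog le_pq : p q / (p <= q)%N.
  move=> W; case: (leqP p q) => [/W//|/ltnW/W Dqp].
  by apply: def_ext Dqp _ => x; split=> ->.
case: (ltngtP p q) le_pq => // [lt_pq|eq_pq] _; last first.
  by apply: def_ext (@def_true n) _ => x; split=> // _; apply: congr_ord.
set d := (q - p)%N.
have le_n : (p + d.+1 <= n)%N by rewrite addnS subnKC ?(ltnW lt_pq).
apply: def_ext (def_widen (def_rshift (st_diag HD d) p) le_n) _ => x.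
rewrite (@congr_ord _ _ x (widen_ord le_n (rshift p ord0)) p) /=; last by rewrite addn0.
by rewrite (@congr_ord _ _ x (widen_ord le_n (rshift p ord_max)) q) //= subnKC ?(ltnW lt_pq).
Qed.

Lemma def_proj N B : D N B -> forall n (le_nN : (n <= N)%N),
  D n (fun x => exists2 w, B w & forall i, w (widen_ord le_nN i) = x i).
Proof.
have proj_id n (le_nn : (n <= n)%N) (C : ('I_n -> M) -> Prop) x :
    C x <-> exists2 w, C w & forall i, w (widen_ord le_nn i) = x i.
  split=> [Cx|[w Cw wx]]; first by exists x => // i; apply: congr_ord.
  by rewrite (_ : x = w) //; apply: functional_extensionality => i; rewrite -wx; apply: congr_ord.
elim: N B => [|N IH] B DB n le_nN.
  have n0 : n = 0%N by apply/eqP; rewrite -leqn0.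
  by subst n; apply: def_ext DB _ => x; apply: proj_id.
case: (leqP n N) => [le_nN'|lt_Nn]; last first.
  have /eqP nN : n == N.+1 by rewrite eqn_leq le_nN.
  by subst n; apply: def_ext DB _ => x; apply: proj_id.
apply: def_ext (IH _ (st_proj HD DB) n le_nN') _ => x; split.
  move=> [y [z [Bz zy] yx]]; exists z => // i.
  by rewrite -yx -zy /init; apply: congr_ord.
move=> [w Bw wx]; exists (init w); first by exists w.
by move=> i; rewrite -wx /init; apply: congr_ord.
Qed.

Definition catv n k (x : 'I_n -> M) (y : 'I_k -> M) : 'I_(n + k) -> M :=
  fun i => match split i with inl a => x a | inr b => y b end.

Lemma catv_lshift n k x y : (fun i => @catv n k x y (lshift k i)) = x.
Proof. by apply: functional_extensionality => i; rewrite /catv (unsplitK (inl i)). Qed.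

Lemma catv_rshift n k x y : (fun i => @catv n k x y (rshift n i)) = y.
Proof. by apply: functional_extensionality => i; rewrite /catv (unsplitK (inr i)). Qed.

Lemma def_exists n k (B : ('I_n -> M) -> ('I_k -> M) -> Prop) :
  D (n + k) (fun w => B (fun i => w (lshift k i)) (fun i => w (rshift n i))) ->
  D n (fun x => exists y, B x y).
Proof.
move=> DB; apply: def_ext (def_proj DB (leq_addr k n)) _ => x; split.
  move=> [w Bw wx]; exists (fun i => w (rshift n i)).
  rewrite (_ : x = (fun i => w (lshift k i))) //.
  by apply: functional_extensionality => i; rewrite -wx; apply: congr_ord.
move=> [y Bxy]; exists (catv x y); first by rewrite catv_lshift catv_rshift.
by move=> i; rewrite -[in RHS](catv_lshift x y); apply: congr_ord.
Qed.

Lemma def_forall n k (B : ('I_n -> M) -> ('I_k -> M) -> Prop) :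
  D (n + k) (fun w => B (fun i => w (lshift k i)) (fun i => w (rshift n i))) ->
  D n (fun x => forall y, B x y).
Proof.
move=> /def_neg/(@def_exists n k (fun x y => ~ B x y))/def_neg DnB.
apply: def_ext DnB _ => x; split=> [nnB y|Bx [y //]].
by apply: NNPP => nB; apply: nnB; exists y.
Qed.

Lemma def_reindex k n (f : 'I_k -> 'I_n) A : D k A ->
  D n (fun x => A (fun i => x (f i))).
Proof.
move=> DA; have := def_and (def_rshift DA n)
  (def_forall_ord (fun i => def_eq (rshift n i) (lshift k (f i)))).
move/(@def_exists n k (fun x y => A y /\ forall i, y i = x (f i))).
move/def_ext; apply=> x; split=> [[y [Ay yx]]|Axf]; last by exists (fun i => x (f i)).
by rewrite (_ : (fun i => _) = y) //; apply: functional_extensionality => i.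
Qed.

Lemma def_lt n (p q : 'I_n) : D n (fun x => lt (x p) (x q)).
Proof.
pose f (i : 'I_2) := if val i == 0%N then p else q.
by apply: def_ext (def_reindex f (st_lt HD)) _.
Qed.

Lemma def_le n (p q : 'I_n) : D n (fun x => le (x p) (x q)).
Proof. exact: def_or (def_lt p q) (def_eq p q). Qed.

Lemma def_point n (p : 'I_n) c : D n (fun x => x p = c).
Proof. by apply: def_ext (def_reindex (fun _ : 'I_1 => p) (st_point HD c)) _. Qed.

Lemma def_add n (p q r : 'I_n) : D n (fun x => x p + x q = x r).
Proof.
pose f (i : 'I_3) := if val i == 0%N then p else if val i == 1%N then q else r.
by apply: def_ext (def_reindex f (st_add HD)) _ => x; rewrite /f /= inordK.
Qed.

Lemma def_lt_point n (p : 'I_n) c : D n (fun x => lt c (x p)).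
Proof.
apply: def_ext (def_exists (k := 1) (B := fun x y => y ord0 = c /\ lt (y ord0) (x p))
  (def_and (def_point _ c) (def_lt _ _))) _ => x.
by split=> [[y [<-]]|]; last by exists (fun _ => c).
Qed.

Lemma def_near n (pd pu : 'I_n) c : D n (fun x => near (x pd) c (x pu)).
Proof.
pose y1 : 'I_3 := @Ordinal 3 1 isT.
pose B x (y : 'I_3 -> M) := y ord0 = c /\ x pu + x pd = y y1 /\ x pd + y ord0 = y ord_max
  /\ lt (y ord0) (y y1) /\ lt (x pu) (y ord_max).
apply: def_ext (def_exists (k := 3) (B := B) (def_and (def_point _ c)
  (def_and (def_add _ _ _) (def_and (def_add _ _ _) (def_and (def_lt _ _) (def_lt _ _)))))) _.
move=> x; rewrite nearE; split=> [[y [<- [-> [<- [lo hi]]]]] //|[lo hi]].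
exists (fun i : 'I_3 => if val i == 0%N then c else if val i == 1%N then x pu + x pd else x pd + c).
by rewrite /B /=.
Qed.

Definition snocv m (x : 'I_m -> M) (v : M) : 'I_m.+1 -> M :=
  fun i => if unlift ord_max i is Some j then x j else v.

Lemma init_snocv m x v : init (@snocv m x v) = x.
Proof.
apply: functional_extensionality => i; rewrite /init /snocv.
by rewrite (_ : widen_ord _ i = lift ord_max i) ?liftK //; apply: ord_inj; rewrite lift_max.
Qed.

Lemma snocv_max m x v : @snocv m x v ord_max = v.
Proof. by rewrite /snocv unlift_none. Qed.

Lemma def_exists_graph m (C : ('I_m -> M) -> Prop) phi N
    (P : ('I_N -> M) -> ('I_m -> M) -> M -> Prop) :
  def_fun D C phi ->
  D (N + m.+1) (fun w => P (fun i => w (lshift m.+1 i))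
                           (init (fun i => w (rshift N i))) (w (rshift N ord_max))) ->
  D N (fun w => exists2 x, C x & P w x (phi x)).
Proof.
move=> Dphi DP.
pose B w (y : 'I_m.+1 -> M) := (C (init y) /\ y ord_max = phi (init y)) /\ P w (init y) (y ord_max).
apply: def_ext (def_exists (B := B) (def_and (def_reindex (fun i => rshift N i) Dphi) DP)) _.
move=> w; split=> [[y [[Cy ->] Py]]|[x Cx Px]]; first by exists (init y).
by exists (snocv x (phi x)); rewrite /B init_snocv snocv_max.
Qed.

Definition boxk m k (a : 'I_m -> M) d (x : 'I_m -> M) :=
  forall i : 'I_m, (i < k)%N -> near d (a i) (x i).

Lemma def_boxk m k a n (pd : 'I_n) (px : 'I_m -> 'I_n) :
  D n (fun w => boxk k a (w pd) (fun i => w (px i))).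
Proof. by apply: def_forall_ord => i; apply: def_imply (def_prop _ _) (def_near _ _ _). Qed.

Section Approximation.
Variables (m : nat) (C : ('I_m -> M) -> Prop) (phi : ('I_m -> M) -> M).
Hypothesis Dphi : def_fun D C phi.

Definition approx k a := forall d e, lt 0 d -> lt 0 e ->
  exists2 x, C x & boxk k a d x /\ lt (phi x) e.

Definition approx_ge k a j t := forall d e, lt 0 d -> lt 0 e ->
  exists2 x, C x & boxk k a d x /\ le t (x j) /\ lt (phi x) e.

Lemma def_approx_ge k a j : def1 D (approx_ge k a j).
Proof.
pose pt : 'I_3 := lshift 2 (ord0 : 'I_1).
pose pd : 'I_3 := rshift 1 ord0; pose pe : 'I_3 := rshift 1 ord_max.
have Dex := def_exists_graph
  (P := fun w x v => boxk k a (w pd) x /\ le (w pt) (x j) /\ lt v (w pe)) Dphi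
  (def_and (def_boxk _ _ _ _) (def_and (def_le _ _) (def_lt _ _))).
have := def_forall (n := 1) (k := 2) (B := fun z de => lt 0 (de ord0) -> lt 0 (de ord_max) ->
    exists2 x, C x & boxk k a (de ord0) x /\ le (z ord0) (x j) /\ lt (phi x) (de ord_max))
  (def_imply (def_lt_point pd 0) (def_imply (def_lt_point pe 0) Dex)).
move/def_ext; apply=> z; split=> [Az d e d_gt0 e_gt0|Az de].
  exact: Az (fun i : 'I_2 => if val i == 0%N then d else e) d_gt0 e_gt0.
exact: Az.
Qed.

Hypothesis Hdc : def_complete lt D.
Variable r : M.
Hypothesis C_bounded : forall x, C x -> forall i, lt (- r) (x i) /\ lt (x i) r.
Variable e0 : M.
Hypothesis e0_gt0 : lt 0 e0.

Lemma approx_ge_sup k a j : approx k a -> exists b, is_lub lt (approx_ge k a j) b.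
Proof.
move=> ak; have A_r : approx_ge k a j (- r).
  move=> d e d_gt0 e_gt0; have [x Cx [box_x phix]] := ak d e d_gt0 e_gt0.
  by exists x => //; split=> //; split=> //; left; case: (C_bounded Cx j).
have [has_sup _] := Hdc (def_approx_ge k a j) (ex_intro _ _ A_r).
apply: has_sup; exists r => t At; have [x Cx [_ [le_tx _]]] := At e0 e0 e0_gt0 e0_gt0.
by left; apply: le_lt_trans le_tx _; case: (C_bounded Cx j).
Qed.

Lemma approx_step k a (lt_km : (k < m)%N) : approx k a ->
  exists b, approx k.+1 (fun i => if val i == k then b else a i).
Proof.
move=> ak; pose j := Ordinal lt_km.
have [b lub_b] := approx_ge_sup j ak.
exists b => d e d_gt0 e_gt0.
have [t At lt_t] := lub_gt lub_b (lt_subr_pos b d_gt0).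
have nA : ~ approx_ge k a j (b + d).
  by move/(proj1 lub_b)/leNgt; apply; apply: lt_addr_pos.
have [d1 [e1 [d1_gt0 e1_gt0 no_x]]] : exists d1 e1, [/\ lt 0 d1, lt 0 e1 &
    ~ exists2 x, C x & boxk k a d1 x /\ le (b + d) (x j) /\ lt (phi x) e1].
  apply: NNPP => H; apply: nA => d1 e1 d1_gt0 e1_gt0.
  by apply: NNPP => nx; apply: H; exists d1, e1.
have [d2 [d2_gt0 d2d d2d1]] := exists_pos_le2 d_gt0 d1_gt0.
have [e2 [e2_gt0 e2e e2e1]] := exists_pos_le2 e_gt0 e1_gt0.
have [x Cx [box_x [le_tx phix]]] := At d2 e2 d2_gt0 e2_gt0.
exists x => //; split; last exact: lt_le_trans phix e2e.
have lt_x_bd : lt (x j) (b + d).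
  apply/ltNge => le_x; apply: no_x; exists x => //; split; last first.
    by split=> //; apply: lt_le_trans phix e2e1.
  by move=> i lt_ik; apply: near_le d2d1 (box_x i lt_ik).
move=> i; rewrite ltnS leq_eqVlt => /orP[/eqP i_k|lt_ik]; last first.
  by rewrite (ltn_eqF lt_ik); apply: near_le d2d (box_x i lt_ik).
have -> : i = j by apply: ord_inj.
rewrite /= eqxx; apply/nearE; split; last by rewrite addrC.
by rewrite -(lt_add2r (- d)) addrK; apply: lt_le_trans lt_t le_tx.
Qed.

Lemma def_image : def1 D (fun y => exists x, C x /\ y = phi x).
Proof.
have := def_exists_graph (N := 1) (P := fun w _ v => w ord0 = v) Dphi (def_eq _ _).
move/def_ext; apply=> z; split=> [[x Cx ->]|[x [Cx ->]]]; by exists x.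
Qed.

Section SmallValues.
Hypothesis phi_small : forall e, lt 0 e -> exists2 x, C x & lt (phi x) e.

Lemma approx0 a : approx 0 a.
Proof. by move=> d e _ /phi_small[x Cx phix]; exists x. Qed.

Lemma approx_exists : exists a, approx m a.
Proof.
suff: forall k, (k <= m)%N -> exists a, approx k a by apply.
elim=> [|k IH] le_km; first by exists (fun _ => 0); apply: approx0.
have [a ak] := IH (ltnW le_km).
by have [b akb] := approx_step le_km ak; eexists; exact: akb.
Qed.

End SmallValues.

Hypothesis C_closed : closed_set lt C.

Lemma approx_mem a : approx m a -> C a.
Proof.
move=> am; apply: NNPP => nCa; have [d [d_gt0 no_y]] := C_closed nCa.
have [x Cx [box_x _]] := am d e0 d_gt0 e0_gt0.
by apply: no_y Cx => i; apply: box_x.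
Qed.

Lemma not_phi_small (psi : ('I_m -> M) -> M) :
  (forall x, C x -> lt 0 (psi x)) ->
  (forall x, C x -> exists delta, lt 0 delta /\
     forall x', C x' -> near_box lt delta x x' -> le (psi x) (phi x')) ->
  ~ forall e, lt 0 e -> exists2 x, C x & lt (phi x) e.
Proof.
move=> psi_gt0 psi_le_phi small; have [a am] := approx_exists small.
have Ca := approx_mem am; have [d [d_gt0 psi_le]] := psi_le_phi a Ca.
have [x Cx [box_x phix]] := am d (psi a) d_gt0 (psi_gt0 a Ca).
by move: phix; apply/leNgt; apply: psi_le Cx (fun i => box_x i (ltn_ord i)).
Qed.

End Approximation.

End Definable.

End OrderedGroup.

Theorem mainTheorem14 (M : zmodType) (lt : M -> M -> Prop)
  (D : forall n, (('I_n -> M) -> Prop) -> Prop)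
  (HM : ordered_group lt) (HD : is_structure lt D)
  (Hdc : def_complete lt D) (Hlo : loc_ominimal lt D)
  (m : nat) (C : ('I_m -> M) -> Prop)
  (HCdef : D m C) (HCcl : closed_set lt C) (HCbd : bounded_set lt C)
  (phi psi : ('I_m -> M) -> M)
  (Hphi : def_fun D C phi) (Hpsi : def_fun D C psi)
  (Hphipos : forall x, C x -> lt 0 (phi x))
  (Hpsipos : forall x, C x -> lt 0 (psi x))
  (Hloc : forall x, C x -> exists delta, lt 0 delta /\
      forall x', C x' -> near_box lt delta x x' -> le lt (psi x) (phi x')) :
  (forall x, ~ C x) \/
  exists s, is_glb lt (fun y => exists x, C x /\ y = phi x) s /\ lt 0 s.
Proof.
case: (classic (exists x, C x)) => [[x0 Cx0]|noC]; last by left => x Cx; apply: noC; exists x.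
right; have [r C_bounded] := HCbd.
have [s glb_s] : exists s, is_glb lt (fun y => exists x, C x /\ y = phi x) s.
  have [_ has_inf] := Hdc _ (def_image HD Hphi) (ex_intro _ _ (ex_intro _ x0 (conj Cx0 erefl))).
  by apply: has_inf; exists 0 => _ [x [Cx ->]]; left; apply: Hphipos.
exists s; split=> //; apply: (glb_gt0 HM glb_s) => [_ [x [Cx ->]]|small].
  exact: Hphipos.
apply: (not_phi_small HM HD Hphi Hdc C_bounded (Hphipos _ Cx0) HCcl Hpsipos Hloc).
by move=> e /small[_ [x [Cx ->]] phix]; exists x.
Qed.
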